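(* For any probability distribution $P_{XY}$ on finite $\mathcal X\times\mathcal Y$, $\lim_{\alpha\to1^-}U_\alpha(X;Y)=U(X;Y)$ and $\lim_{\alpha\to1^+}U_\alpha(X;Y)=U(X;Y)$.
   Context: $D(P\|Q)=\sum P\log(P/Q)$ ($0\log(0/q)=0$; $+\infty$ if $P\not\ll Q$). For $\alpha\in(0,1)\cup(1,\infty)$, $D_\alpha(P\|Q)=\frac1{\alpha-1}\log\sum_{x:P(x)>0}P(x)^\alpha Q(x)^{1-\alpha}$ ($+\infty$ if $\alpha>1$ and $P\not\ll Q$). With $P_X$ the $X$-marginal: $U(X;Y)=\min_{Q_Y}D(P_X\times Q_Y\|P_{XY})$ and the Rényi umlaut information is $U_\alpha(X;Y)=\min_{Q_Y}D_\alpha(P_X\times Q_Y\|P_{XY})$. *)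

From HB Require Import structures.
From mathcomp Require Import all_boot all_order all_algebra.
From mathcomp Require Import all_classical all_reals all_analysis.
Set Implicit Arguments. Unset Strict Implicit. Unset Printing Implicit Defensive.
Import Order.TTheory GRing.Theory Num.Theory.
Local Open Scope classical_set_scope.
Local Open Scope ring_scope.

Section Info.
Variable R : realType.

Definition is_dist (T : finType) (P : T -> R) : Prop :=
  (forall t, 0 <= P t) /\ \sum_(t : T) P t = 1.

Definition abs_cont (T : finType) (P Q : T -> R) : Prop :=
  forall t, 0 < P t -> 0 < Q t.

(* KL divergence, natural log, 0 log(0/q) = 0, +oo if not P << Q *)
Definition KL (T : finType) (P Q : T -> R) : \bar R :=
  if `[< abs_cont P Q >] then
    (\sum_(t : T | 0 < P t) P t * ln (P t / Q t))%:E
  else +oo%E.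

(* Renyi divergence of order a (a in (0,1) U (1,oo)) *)
Definition renyi_sum (T : finType) (a : R) (P Q : T -> R) : R :=
  \sum_(t : T | 0 < P t) P t `^ a * Q t `^ (1 - a).

Definition renyi (T : finType) (a : R) (P Q : T -> R) : \bar R :=
  if (1 < a) && ~~ `[< abs_cont P Q >] then +oo%E
  else if renyi_sum a P Q == 0 then +oo%E  (* a < 1, disjoint supports: log 0 / (a-1) = +oo *)
  else (ln (renyi_sum a P Q) / (a - 1))%:E.

Definition margX (X Y : finType) (P : X * Y -> R) : X -> R :=
  fun x => \sum_(y : Y) P (x, y).

Definition prod_dist (X Y : finType) (PX : X -> R) (QY : Y -> R) : X * Y -> R :=
  fun p => PX p.1 * QY p.2.

(* umlaut information: min over Q_Y (taken as the infimum, which is attained) *)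
Definition umlaut (X Y : finType) (P : X * Y -> R) : \bar R :=
  ereal_inf [set KL (prod_dist (margX P) Q) P | Q in [set Q : Y -> R | is_dist Q]].

Definition renyi_umlaut (X Y : finType) (a : R) (P : X * Y -> R) : \bar R :=
  ereal_inf [set renyi a (prod_dist (margX P) Q) P | Q in [set Q : Y -> R | is_dist Q]].

End Info.

From HB Require Import structures.
From mathcomp Require Import all_boot all_order all_algebra.
From mathcomp Require Import all_classical all_reals all_analysis.
From mathcomp Require Import ring lra.
Import Order.TTheory GRing.Theory Num.Theory.
Local Open Scope classical_set_scope.
Local Open Scope ring_scope.
Import numFieldNormedType.Exports.
Set Implicit Arguments. Unset Strict Implicit. Unset Printing Implicit Defensive.

(* For 0 < a < 1 the infimum defining U_a is attained (Hoelder, via weighted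
   AM-GM) at Q_Y proportional to the power mean of order 1 - a of
   x |-> P(x, y) / P_X(x) under P_X, so U_a = - ln of the sum over y of these
   power means.  For a > 1 the same holds with the sum restricted to the columns y
   with P(x, y) > 0 wherever P_X(x) > 0, and by Gibbs' inequality U = - ln of the
   sum of the geometric means over those columns.  As a -> 1 a power mean tends to
   the geometric mean (the cumulant generating function has the mean as slope at
   0), while for a non-covering column the total weight is below 1, so its power
   mean tends to 0 as a -> 1^-.  Continuity of - ln, with - ln 0 = +oo when no
   column covers, concludes. *)

Section real_lemmas.
Variable R : realType.
Implicit Types u v a : R.

Lemma ge0_ngt0_eq0 u : 0 <= u -> ~~ (0 < u) -> u = 0.
Proof. by move=> u0; rewrite lt0r u0 andbT negbK => /eqP. Qed.

Lemma psumr_gt0_exists (I : finType) (F : I -> R) :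
  (forall i, 0 <= F i) -> 0 < \sum_i F i -> exists i, 0 < F i.
Proof.
move=> F0 /lt0r_neq0/eqP sumF_neq0.
by have [i /andP[_ Fi]] := psumr_neq0P (fun i _ => F0 i) sumF_neq0; exists i.
Qed.

Lemma psumr_gt0 (I : finType) (A : pred I) (F : I -> R) j :
  (forall i, A i -> 0 <= F i) -> A j -> 0 < F j -> 0 < \sum_(i | A i) F i.
Proof.
move=> F0 Aj Fj; rewrite (bigD1 j) //=; apply: lt_le_trans Fj _.
by rewrite lerDl; apply: sumr_ge0 => i /andP[Ai _]; exact: F0.
Qed.

Lemma powR_geomean_le u v a : 0 <= u -> 0 <= v -> 0 < a < 1 ->
  u `^ a * v `^ (1 - a) <= a * u + (1 - a) * v.
Proof.
move=> u0 v0 /andP[a0 a1].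
have b0 : 0 < 1 - a by rewrite subr_gt0.
have ia : 0 < a^-1 by rewrite invr_gt0.
have ib : 0 < (1 - a)^-1 by rewrite invr_gt0.
have := @conjugate_powR R (u `^ a) (v `^ (1 - a)) a^-1 (1 - a)^-1
  (powR_ge0 _ _) (powR_ge0 _ _) ia ib.
rewrite !invrK -!powRrM !mulfV ?gt_eqF// !powRr1//.
by rewrite addrC subrK => /(_ erefl); rewrite !(mulrC _ a) !(mulrC _ (1 - a)).
Qed.

Lemma powR_geomean_ge u v a : 0 <= u -> 0 < v -> 1 < a ->
  a * u + (1 - a) * v <= u `^ a * v `^ (1 - a).
Proof.
move=> u0 v0 a1.
have a0 : 0 < a by apply: lt_trans a1.
have b0 : 0 < a - 1 by rewrite subr_gt0.
set q := a / (a - 1).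
have q0 : 0 < q by rewrite divr_gt0.
have pq : a^-1 + q^-1 = 1 by rewrite /q invf_div; field; rewrite gt_eqF.
have := @conjugate_powR R (u * v `^ ((1 - a) / a)) (v `^ ((a - 1) / a)) a q
  (mulr_ge0 u0 (powR_ge0 _ _)) (powR_ge0 _ _) a0 q0 pq.
rewrite -mulrA -powRD; last by apply/implyP => _; rewrite gt_eqF.
have -> : (1 - a) / a + (a - 1) / a = 0 by rewrite -mulrDl addrC addrA subrK subrr mul0r.
rewrite powRr0 mulr1 powRM ?powR_ge0// -!powRrM.
have -> : (1 - a) / a * a = 1 - a by rewrite mulfVK ?gt_eqF.
have -> : (a - 1) / a * q = 1 by rewrite /q; field; rewrite !gt_eqF.
rewrite (powRr1 (ltW v0)) => young.
have : a * u <= u `^ a * v `^ (1 - a) + (a - 1) * v.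
  rewrite -(@ler_pM2r _ a^-1) ?invr_gt0// mulrAC mulfV ?gt_eqF// mul1r.
  apply: (le_trans young); rewrite le_eqVlt; apply/orP; left; apply/eqP.
  by rewrite /q; field; rewrite !gt_eqF.
lra.
Qed.

Lemma powR_divMr a u Z : 0 <= u -> 0 < Z -> u `^ a = (u / Z) `^ a * Z `^ a.
Proof. by move=> u0 Z0; rewrite -powRM ?mulfVK ?gt_eqF ?divr_ge0 // ltW. Qed.

Lemma sum_mixture_powR (I : finType) (A : pred I) (Q w : I -> R) a :
  \sum_(i | A i) Q i = 1 -> 0 < \sum_(i | A i) w i ->
  \sum_(i | A i) (\sum_(j | A j) w j) `^ (1 - a) *
     (a * Q i + (1 - a) * (w i / \sum_(j | A j) w j))
  = (\sum_(i | A i) w i) `^ (1 - a).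
Proof.
set Z := \sum_(i | A i) w i => Q1 Z0.
rewrite -mulr_sumr big_split /= -!mulr_sumr -mulr_suml Q1 -/Z mulfV ?gt_eqF //.
by rewrite !mulr1 addrC subrK mulr1.
Qed.

Lemma sum_powR_le_lt1 (I : finType) (A : pred I) (Q w : I -> R) a :
  0 < a < 1 -> (forall i, 0 <= Q i) -> (forall i, 0 <= w i) ->
  \sum_(i | A i) Q i = 1 -> 0 < \sum_(i | A i) w i ->
  \sum_(i | A i) Q i `^ a * w i `^ (1 - a) <= (\sum_(i | A i) w i) `^ (1 - a).
Proof.
move=> a01 Q0 w0 Q1 Z0; rewrite -(sum_mixture_powR a Q1 Z0).
apply: ler_sum => i _; rewrite (powR_divMr (1 - a) (w0 i) Z0) mulrA mulrC.
apply: ler_wpM2l; first exact: powR_ge0.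
by apply: powR_geomean_le => //; rewrite divr_ge0 // ltW.
Qed.

Lemma sum_powR_ge_gt1 (I : finType) (A : pred I) (Q w : I -> R) a :
  1 < a -> (forall i, 0 <= Q i) -> (forall i, A i -> 0 < w i) ->
  \sum_(i | A i) Q i = 1 -> 0 < \sum_(i | A i) w i ->
  (\sum_(i | A i) w i) `^ (1 - a) <= \sum_(i | A i) Q i `^ a * w i `^ (1 - a).
Proof.
move=> a1 Q0 w0 Q1 Z0; rewrite -(sum_mixture_powR a Q1 Z0).
apply: ler_sum => i Ai; rewrite (powR_divMr (1 - a) (ltW (w0 i Ai)) Z0).
rewrite [leRHS]mulrA [leRHS]mulrC; apply: ler_wpM2l; first exact: powR_ge0.
by apply: powR_geomean_ge => //; rewrite divr_gt0 // w0.
Qed.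

Lemma sum_powR_normalized (I : finType) (A : pred I) (w : I -> R) a :
  a != 0 -> (forall i, 0 <= w i) -> 0 < \sum_(i | A i) w i ->
  \sum_i (if A i then w i / \sum_(j | A j) w j else 0) `^ a * w i `^ (1 - a)
  = (\sum_(i | A i) w i) `^ (1 - a).
Proof.
move=> a0 w0; set Z := \sum_(i | A i) w i => Z0.
rewrite (bigID A) /= [X in _ + X]big1 ?addr0; last first.
  by move=> i /negbTE ->; rewrite powR0 // mul0r.
transitivity (\sum_(i | A i) w i / Z * Z `^ (1 - a)); last first.
  by rewrite -mulr_suml -mulr_suml -/Z mulfV ?gt_eqF // mul1r.
apply: eq_bigr => i ->.
have [->|wi_neq0] := eqVneq (w i) 0; first by rewrite !mul0r (powR0 a0) mul0r.
have wi : 0 < w i by rewrite lt0r wi_neq0 w0.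
rewrite (powR_divMr (1 - a) (w0 i) Z0) mulrA -powRD; last first.
  by apply/implyP => _; rewrite gt_eqF // divr_gt0.
by rewrite addrC subrK powRr1 // divr_ge0 // ltW.
Qed.

Lemma subr_le_mul_ln_div u v : 0 <= u -> 0 < v -> u - v <= u * ln (u / v).
Proof.
move=> u0 v0; have [->|u_neq0] := eqVneq u 0; first by rewrite sub0r mul0r oppr_le0 ltW.
have u_gt0 : 0 < u by rewrite lt0r u_neq0.
have ln_le : ln (v / u) <= v / u - 1.
  have vu_gt0 : 0 < v / u by rewrite divr_gt0.
  by have := @le_ln1Dx R (v / u - 1); rewrite [1 + _]addrC subrK; apply; lra.
have := ler_wpM2l (ltW u_gt0) ln_le.
have -> : u * (v / u - 1) = v - u by field; rewrite gt_eqF.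
by rewrite -invf_div lnV ?posrE ?divr_gt0 // mulrN; lra.
Qed.

Lemma ereal_inf_image_attained (T : Type) (D : set T) (F : T -> \bar R) (v : \bar R) :
  (forall Q, D Q -> (v <= F Q)%E) -> (exists2 Q, D Q & F Q = v) ->
  ereal_inf [set F Q | Q in D] = v.
Proof.
move=> lb [Q DQ FQ]; apply/eqP; rewrite eq_le; apply/andP; split.
  by apply: ge_ereal_inf; exists v => //; exists Q.
by apply: le_ereal_inf_tmp => _ [Q' DQ' <-]; exact: lb.
Qed.

Lemma ereal_inf_image_pinfty (T : Type) (D : set T) (F : T -> \bar R) :
  (forall Q, D Q -> F Q = +oo%E) -> ereal_inf [set F Q | Q in D] = +oo%E.
Proof. by move=> H; apply/ereal_inf_pinfty => _ [Q DQ <-]; rewrite H. Qed.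

End real_lemmas.

Section moment_generating_function.
Variables (R : realType) (I : finType) (q c : I -> R).

Definition mgf (t : R) := \sum_i q i * expR (t * c i).

Lemma mgf_ge0 (t : R) : (forall i, 0 <= q i) -> 0 <= mgf t.
Proof. by move=> q0; apply: sumr_ge0 => i _; rewrite mulr_ge0 ?expR_ge0. Qed.

Lemma mgf0 : mgf 0 = \sum_i q i.
Proof. by apply: eq_bigr => i _; rewrite mul0r expR0 mulr1. Qed.

Lemma is_derive_mgf (t : R) : is_derive t 1 mgf (\sum_i q i * (c i * expR (t * c i))).
Proof.
rewrite /mgf -fct_sumE; elim/big_ind2 : _ => [|f df g dg|i _]; first exact: is_derive_cst.
  by move=> *; exact: is_deriveD.
have -> : (fun s : R => q i * expR (s * c i)) = q i *: (expR \o (fun s => s * c i)).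
  by apply/funext.
apply: is_deriveZ; rewrite mulrC; apply: is_derive1_comp.
have -> : (fun s : R => s * c i) = c i *: id by apply/funext => s /=; rewrite mulrC.
by rewrite -[X in is_derive _ _ _ X]mulr1; exact: is_deriveZ.
Qed.

Lemma mgf_continuous (t : R) : {for t, continuous mgf}.
Proof.
apply: differentiable_continuous; apply/derivable1_diffP.
exact: (@ex_derive _ _ _ _ _ _ _ (is_derive_mgf t)).
Qed.

(* The cumulant generating function [ln \o mgf] vanishes at 0 with slope the mean of [c]. *)
Lemma cvg_ln_mgf_div : (forall i, 0 <= q i) -> \sum_i q i = 1 ->
  t^-1 * ln (mgf t) @[t --> (0:R)^'] --> \sum_i q i * c i.
Proof.
move=> q0 q1; have mgf0_eq1 : mgf 0 = 1 by rewrite mgf0.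
have dln : is_derive (0:R) 1 (@ln R \o mgf) ((mgf 0)^-1 * (\sum_i q i * (c i * expR (0 * c i)))).
  by apply: is_derive1_comp; [apply: is_derive1_ln; rewrite mgf0_eq1 | exact: is_derive_mgf].
have dln_val := @derive_val _ _ _ _ _ _ _ dln; rewrite /derive in dln_val.
have := @ex_derive _ _ _ _ _ _ _ dln; rewrite /derivable dln_val.
rewrite mgf0_eq1 invr1 mul1r.
under eq_bigr do rewrite mul0r expR0 mulr1.
apply: cvg_trans; apply: near_eq_cvg; apply: nearW => h /=.
by rewrite mgf0_eq1 ln1 subr0 addr0 /GRing.scale /= mulr1.
Qed.

End moment_generating_function.

Section limits_at_one.
Variable R : realType.

Lemma cvg_onem (T : topologicalType) (f : R -> T) (l : T) :
  f t @[t --> (0:R)^'] --> l -> f (1 - a) @[a --> (1:R)^'] --> l.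
Proof.
move=> fl A /fl [e /= e0 fA]; exists e => // a /= ae a1.
apply: fA; last by rewrite subr_eq0 eq_sym.
by rewrite /ball_ /= sub0r normrN.
Qed.

Lemma near_onem_left (Pr : R -> Prop) :
  (\forall t \near (0:R), Pr t) -> \forall a \near (1:R)^'-, Pr (1 - a).
Proof.
move=> [e /= e0 Pr_e]; exists e => // a /= ae a1; apply: Pr_e.
by rewrite /ball_ /= sub0r normrN.
Qed.

Lemma cvg_expR_div_onem (k : R) : k < 0 -> expR ((1 - a)^-1 * k) @[a --> (1:R)^'-] --> 0.
Proof.
move=> k0; apply/cvgrPdist_lt => e e0.
set M := Num.min (ln e) (-1).
have M0 : M < 0 by rewrite /M gt_min ltrN10 orbT.
have Mle : M <= ln e by rewrite /M ge_min lexx.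
set d := k / M.
have Md : M * d = k by rewrite /d mulrC mulfVK // ltr0_neq0.
have d0 : 0 < d by rewrite /d -[k]opprK -[M]opprK invrN mulrNN divr_gt0 // oppr_gt0.
near=> a.
have a1 : a < 1 by near: a; exact: nbhs_left_lt.
have ad : 1 - d < a by near: a; apply: nbhs_left_gt; rewrite ltrBlDr ltrDl.
rewrite sub0r normrN ger0_norm ?expR_ge0 // -[e in _ < e]lnK ?posrE // ltr_expR.
apply: (lt_le_trans _ Mle); rewrite mulrC ltr_pdivrMr ?subr_gt0 //.
nra.
Unshelve. all: by end_near.
Qed.

(* [phi (1 - a)] stays below some [c < 1] near [a = 1], and [c `^ (1 - a)^-1] vanishes. *)
Lemma cvg_powR_inv_onem (phi : R -> R) : (forall t, 0 <= phi t) ->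
  {for 0, continuous phi} -> phi 0 < 1 ->
  phi (1 - a) `^ (1 - a)^-1 @[a --> (1:R)^'-] --> 0.
Proof.
move=> phi_ge0 phi_cont phi0_lt1.
set c := (phi 0 + 1) / 2.
have phi0_ge0 := phi_ge0 0.
have c_gt0 : 0 < c by rewrite /c; lra.
have c_lt1 : c < 1 by rewrite /c; lra.
have phi0_lt_c : phi 0 < c by rewrite /c; lra.
have near_c : \forall t \near (0:R), phi t < c by exact: cvgr_lt phi_cont _ phi0_lt_c.
apply: (@squeeze_cvgr _ _ _ _ (fun=> 0) (fun a => expR ((1 - a)^-1 * ln c))); last 2 first.
- exact: cvg_cst.
- by apply: cvg_expR_div_onem; rewrite ln_lt0 // c_gt0 c_lt1.
near=> a.
have a1 : a < 1 by near: a; exact: nbhs_left_lt.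
have phi_lt_c : phi (1 - a) < c by near: a; exact: near_onem_left near_c.
apply/andP; split; first exact: powR_ge0.
apply: (le_trans (ge0_ler_powR _ _ _ (ltW phi_lt_c))).
- by rewrite invr_ge0 subr_ge0 ltW.
- by rewrite nnegrE phi_ge0.
- by rewrite nnegrE ltW.
by rewrite /powR gt_eqF.
Unshelve. all: by end_near.
Qed.

Lemma cvg_at_right0 (T : Type) (F : set_system T) (FF : Filter F) (u : T -> R) :
  u @ F --> 0 -> (\forall x \near F, 0 < u x) -> u @ F --> (0:R)^'+.
Proof.
move=> u0 u_gt0 A [e /= e0 eA].
have u_near := (cvgrPdist_lt _ _).1 u0 e e0.
near=> x; apply: eA; last by near: x; exact: u_gt0.
by rewrite /ball_ /=; near: x; exact: u_near.
Unshelve. all: by end_near.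
Qed.

Lemma cvgey_oppr_ln (T : Type) (F : set_system T) (FF : Filter F) (u : T -> R) :
  u @ F --> 0 -> (\forall x \near F, 0 < u x) -> ((- ln (u x))%:E @[x --> F] --> +oo)%E.
Proof.
move=> u0 u_gt0; apply/cvgeryP.
have lnu := cvg_comp _ _ (cvg_at_right0 FF u0 u_gt0) (@lnNy R).
apply/cvgryPge => A; have := (cvgrNyPle _).1 lnu (- A).
by move=> /(_ FF); apply: filterS => x /=; rewrite lerNr.
Qed.

Lemma cvg_oppr_ln (T : Type) (F : set_system T) (FF : Filter F) (u : T -> R) (l : R) :
  0 < l -> u @ F --> l -> ((- ln (u x))%:E @[x --> F] --> (- ln l)%:E)%E.
Proof.
move=> l0 ul; apply: cvg_EFin; first exact: nearW.
by apply: cvgN; apply: continuous_cvg => //; exact: continuous_ln.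
Qed.

End limits_at_one.

Section umlaut_closed_forms.
Variables (R : realType) (X Y : finType) (P : X * Y -> R).
Hypothesis P_dist : is_dist P.

Local Notation p := (margX P).

Lemma P_ge0 t : 0 <= P t. Proof. by case: P_dist. Qed.

Lemma margX_ge0 x : 0 <= p x.
Proof. by apply: sumr_ge0 => y _; exact: P_ge0. Qed.

Lemma sum_margX : \sum_x p x = 1.
Proof. by case: P_dist => _ <-; rewrite /margX pair_big /=; apply: eq_bigr => -[x y]. Qed.

Lemma exists_margX_gt0 : exists x, 0 < p x.
Proof. by apply: psumr_gt0_exists; [exact: margX_ge0 | rewrite sum_margX ltr01]. Qed.

Definition covers y := [forall x, (0 < p x) ==> (0 < P (x, y))].

Lemma coversP y : reflect (forall x, 0 < p x -> 0 < P (x, y)) (covers y).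
Proof.
apply: (iffP forallP) => cov x; first by move=> px; have /implyP := cov x; apply.
by apply/implyP; exact: cov.
Qed.

Lemma abs_cont_prodP (Q : Y -> R) : (forall y, 0 <= Q y) ->
  abs_cont (prod_dist p Q) P <-> (forall y, 0 < Q y -> covers y).
Proof.
move=> Q0; split => [ac y Qy|cov [x y]].
  by apply/coversP => x px; apply: (ac (x, y)); rewrite /prod_dist /= mulr_gt0.
rewrite /prod_dist /= mulr_ge0_gt0 ?margX_ge0 // => /andP[px Qy].
exact: (coversP _ (cov y Qy)).
Qed.

Lemma sum_covers (Q F : Y -> R) : (forall y, 0 <= Q y) ->
  (forall y, 0 < Q y -> covers y) -> (forall y, Q y = 0 -> F y = 0) ->
  \sum_y F y = \sum_(y | covers y) F y.
Proof.
move=> Q0 cov F0; rewrite (bigID covers) /= [X in _ + X]big1 ?addr0 // => y ncov.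
by apply/F0/ge0_ngt0_eq0 => //; apply: contraNN ncov; exact: cov.
Qed.

(* [col_mean a y] is the power mean of order [1 - a] of [x |-> P (x, y) / p x] under [p];
   [expR (col_loggeo y)] is the corresponding geometric mean. *)
Definition col_sum a y := \sum_x p x `^ a * P (x, y) `^ (1 - a).
Definition col_mean a y := col_sum a y `^ (1 - a)^-1.
Definition Zlt a := \sum_y col_mean a y.
Definition Zgt a := \sum_(y | covers y) col_mean a y.
Definition col_logratio y x := ln (P (x, y) / p x).
Definition col_loggeo y := \sum_x p x * col_logratio y x.
Definition Z1 := \sum_(y | covers y) expR (col_loggeo y).

Lemma col_sum_ge0 a y : 0 <= col_sum a y.
Proof. by apply: sumr_ge0 => x _; rewrite mulr_ge0 ?powR_ge0. Qed.

Lemma col_mean_ge0 a y : 0 <= col_mean a y.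
Proof. exact: powR_ge0. Qed.

Lemma col_sumE a y : a != 1 -> col_sum a y = col_mean a y `^ (1 - a).
Proof.
by move=> a1; rewrite /col_mean -powRrM mulVf ?powRr1 ?col_sum_ge0 // subr_eq0 eq_sym.
Qed.

Lemma col_sum_gt0 a x y : 0 < p x -> 0 < P (x, y) -> 0 < col_sum a y.
Proof.
move=> px Pxy; apply: (psumr_gt0 (j := x)) => // [i _|].
  by rewrite mulr_ge0 ?powR_ge0.
by rewrite mulr_gt0 ?powR_gt0.
Qed.

Lemma col_sum_gt0_covers a y : covers y -> 0 < col_sum a y.
Proof.
move=> /coversP cov; have [x px] := exists_margX_gt0.
exact: col_sum_gt0 px (cov x px).
Qed.

Lemma Zlt_gt0 a : 0 < Zlt a.
Proof.
have [x px] := exists_margX_gt0.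
have [y Pxy] : exists y, 0 < P (x, y) by apply: psumr_gt0_exists => // y; exact: P_ge0.
apply: (psumr_gt0 (j := y)) => // [y' _|]; first exact: col_mean_ge0.
exact/powR_gt0/(col_sum_gt0 a px Pxy).
Qed.

Lemma Zgt_gt0 a : (exists y, covers y) -> 0 < Zgt a.
Proof.
move=> [y cov]; apply: (psumr_gt0 (j := y)) => // [y' _|]; first exact: col_mean_ge0.
exact/powR_gt0/col_sum_gt0_covers.
Qed.

Lemma Z1_gt0 : (exists y, covers y) -> 0 < Z1.
Proof.
by move=> [y cov]; apply: (psumr_gt0 (j := y)) => *; rewrite ?expR_ge0 ?expR_gt0.
Qed.

Lemma Z1_eq0 : ~ (exists y, covers y) -> Z1 = 0.
Proof. by move=> ncov; rewrite /Z1 big_pred0 // => y; apply/negP => cov; apply: ncov; exists y. Qed.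

Lemma renyi_sum_prod (Q : Y -> R) a : (forall y, 0 <= Q y) -> 0 < a ->
  renyi_sum a (prod_dist p Q) P = \sum_y Q y `^ a * col_sum a y.
Proof.
move=> Q0 a0; rewrite /renyi_sum big_mkcond /=.
transitivity (\sum_t (prod_dist p Q t) `^ a * P t `^ (1 - a)).
  apply: eq_bigr => t _; case: ifPn => // Qt.
  by rewrite (ge0_ngt0_eq0 _ Qt) ?powR0 ?mul0r ?gt_eqF // mulr_ge0 ?margX_ge0.
rewrite (_ : \sum_t _ = \sum_x \sum_y (prod_dist p Q (x, y)) `^ a * P (x, y) `^ (1 - a)).
  2: by rewrite pair_big /=; apply: eq_bigr => -[x y].
rewrite exchange_big /=; apply: eq_bigr => y _; rewrite /col_sum mulr_sumr.
apply: eq_bigr => x _; rewrite /prod_dist /= powRM ?margX_ge0 //.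
by rewrite (mulrC (p x `^ a)) -mulrA.
Qed.

Lemma renyi_umlaut_lt1 a : 0 < a < 1 -> renyi_umlaut a P = (- ln (Zlt a))%:E.
Proof.
move=> /andP[a0 a1].
have a_neq1 : a != 1 by rewrite lt_eqF.
have Z_gt0 := Zlt_gt0 a.
rewrite /renyi_umlaut /renyi ltNge (ltW a1) /=.
apply: ereal_inf_image_attained => [Q [Q0 Q1]|].
  rewrite renyi_sum_prod //; case: eqP => [_|S_neq0]; first exact: leey.
  have S_gt0 : 0 < \sum_y Q y `^ a * col_sum a y.
    by rewrite lt0r; apply/andP; split; [exact/eqP | apply: sumr_ge0 => y _;
      rewrite mulr_ge0 ?powR_ge0 ?col_sum_ge0].
  have S_le : \sum_y Q y `^ a * col_sum a y <= Zlt a `^ (1 - a).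
    under eq_bigr do rewrite col_sumE //.
    by apply: sum_powR_le_lt1 => //; [exact/andP | exact: col_mean_ge0].
  rewrite lee_fin ler_ndivlMr ?subr_lt0 //.
  have -> : - ln (Zlt a) * (a - 1) = ln (Zlt a `^ (1 - a)) by rewrite ln_powR; ring.
  by rewrite ler_ln ?posrE ?powR_gt0.
exists (fun y => col_mean a y / Zlt a).
  split => [y|]; first by rewrite divr_ge0 ?col_mean_ge0 ?ltW.
  by rewrite -mulr_suml mulfV ?gt_eqF.
rewrite renyi_sum_prod // => [|y]; last by rewrite divr_ge0 ?col_mean_ge0 ?ltW.
under eq_bigr do rewrite col_sumE //.
have := sum_powR_normalized (A := xpredT) (lt0r_neq0 a0) (@col_mean_ge0 a) Z_gt0.
rewrite /= => ->.
rewrite powR_eq0 gt_eqF //= ln_powR; congr EFin; field.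
by rewrite subr_eq0.
Qed.

Lemma renyi_umlaut_gt1 a : 1 < a -> (exists y, covers y) ->
  renyi_umlaut a P = (- ln (Zgt a))%:E.
Proof.
move=> a1 cov.
have a0 : 0 < a by apply: lt_trans a1.
have a_neq1 : a != 1 by rewrite gt_eqF.
have Z_gt0 := Zgt_gt0 a cov.
rewrite /renyi_umlaut /renyi a1 /=.
apply: ereal_inf_image_attained => [Q [Q0 Q1]|].
  case: asboolP => [ac|_]; last exact: leey.
  have Q_cov := (abs_cont_prodP Q0).1 ac.
  rewrite renyi_sum_prod //.
  rewrite (sum_covers Q0 Q_cov) => [|y ->]; last by rewrite powR0 ?mul0r ?gt_eqF.
  under eq_bigr do rewrite col_sumE //.
  have S_ge : Zgt a `^ (1 - a) <= \sum_(y | covers y) Q y `^ a * col_mean a y `^ (1 - a).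
    apply: sum_powR_ge_gt1 => // [y ycov|]; first exact/powR_gt0/col_sum_gt0_covers.
    by rewrite -(sum_covers Q0 Q_cov).
  have S_gt0 := lt_le_trans (powR_gt0 _ Z_gt0) S_ge.
  rewrite gt_eqF // lee_fin ler_pdivlMr ?subr_gt0 //.
  have -> : - ln (Zgt a) * (a - 1) = ln (Zgt a `^ (1 - a)) by rewrite ln_powR; ring.
  by rewrite ler_ln ?posrE ?powR_gt0.
set Q := fun y => if covers y then col_mean a y / Zgt a else 0.
have Q0 y : 0 <= Q y by rewrite /Q; case: ifP => // _; rewrite divr_ge0 ?col_mean_ge0 ?ltW.
exists Q.
  by split => //; rewrite /Q -big_mkcond /= -mulr_suml mulfV ?gt_eqF.
have ac : abs_cont (prod_dist p Q) P.
  by apply/(abs_cont_prodP Q0) => y; rewrite /Q; case: ifP; rewrite ?ltxx.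
rewrite asboolT // renyi_sum_prod //.
under eq_bigr do rewrite col_sumE //.
rewrite (sum_powR_normalized (A := covers) (lt0r_neq0 a0) (@col_mean_ge0 a) Z_gt0).
rewrite powR_eq0 gt_eqF //= ln_powR; congr EFin; field.
by rewrite subr_eq0.
Qed.

Lemma renyi_umlaut_gt1_uncovered a : 1 < a -> ~ (exists y, covers y) ->
  renyi_umlaut a P = +oo%E.
Proof.
move=> a1 ncov; apply: ereal_inf_image_pinfty => Q [Q0 Q1]; rewrite /renyi a1 /=.
case: asboolP => // ac; exfalso.
have [y Qy] : exists y, 0 < Q y by apply: psumr_gt0_exists; rewrite // Q1.
by apply: ncov; exists y; exact: (abs_cont_prodP Q0).1 ac y Qy.
Qed.

Lemma KL_prod (Q : Y -> R) : is_dist Q -> abs_cont (prod_dist p Q) P ->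
  KL (prod_dist p Q) P = (\sum_y Q y * (ln (Q y) - col_loggeo y))%:E.
Proof.
move=> [Q0 Q1] ac; rewrite /KL asboolT //; congr EFin.
rewrite big_mkcond /=.
transitivity (\sum_t prod_dist p Q t * ln (prod_dist p Q t / P t)).
  apply: eq_bigr => t _; case: ifPn => // Qt.
  by rewrite (ge0_ngt0_eq0 _ Qt) ?mul0r // mulr_ge0 ?margX_ge0.
rewrite (_ : \sum_t _ = \sum_x \sum_y
    prod_dist p Q (x, y) * ln (prod_dist p Q (x, y) / P (x, y))).
  2: by rewrite pair_big /=; apply: eq_bigr => -[x y].
rewrite exchange_big /=; apply: eq_bigr => y _.
have [Qy0|Qy_neq0] := eqVneq (Q y) 0.
  by rewrite Qy0 mul0r big1 // => x _; rewrite /prod_dist /= Qy0 mulr0 mul0r.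
have Qy : 0 < Q y by rewrite lt0r Qy_neq0 Q0.
have ycov := (abs_cont_prodP Q0).1 ac y Qy.
have -> : ln (Q y) - col_loggeo y = \sum_x p x * (ln (Q y) - col_logratio y x).
  rewrite /col_loggeo -[ln (Q y) in LHS]mul1r -sum_margX mulr_suml -sumrB.
  by apply: eq_bigr => x _; rewrite mulrBr.
rewrite mulr_sumr; apply: eq_bigr => x _; rewrite /prod_dist /= /col_logratio.
have [->|px_neq0] := eqVneq (p x) 0; first by rewrite !mul0r mulr0.
have px : 0 < p x by rewrite lt0r px_neq0 margX_ge0.
have Pxy : 0 < P (x, y) by exact: (coversP _ ycov).
rewrite -ln_div ?posrE ?divr_gt0 //.
have -> : Q y / (P (x, y) / p x) = p x * Q y / P (x, y).
  by field; apply/andP; split; rewrite gt_eqF.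
by ring.
Qed.

(* Gibbs: the minimiser is [Q y] proportional to the geometric mean [expR (col_loggeo y)]. *)
Lemma umlaut_covered : (exists y, covers y) -> umlaut P = (- ln Z1)%:E.
Proof.
move=> cov; have Z_gt0 := Z1_gt0 cov.
set W := fun y => if covers y then expR (col_loggeo y) / Z1 else 0.
have W0 y : 0 <= W y by rewrite /W; case: ifP => // _; rewrite divr_ge0 ?expR_ge0 ?ltW.
have W1 : \sum_y W y = 1 by rewrite /W -big_mkcond /= -mulr_suml mulfV ?gt_eqF.
apply: ereal_inf_image_attained => [Q [Q0 Q1]|].
  have [ac|nac] := pselect (abs_cont (prod_dist p Q) P); last by rewrite /KL asboolF ?leey.
  rewrite KL_prod // lee_fin.
  have -> : - ln Z1 = \sum_y (Q y - W y - Q y * ln Z1).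
    by rewrite !sumrB -mulr_suml Q1 W1 subrr sub0r mul1r.
  apply: ler_sum => y _.
  have [->|Qy_neq0] := eqVneq (Q y) 0; first by rewrite !mul0r subr0 sub0r oppr_le0.
  have Qy : 0 < Q y by rewrite lt0r Qy_neq0 Q0.
  have ycov := (abs_cont_prodP Q0).1 ac y Qy.
  have Wy : 0 < W y by rewrite /W ycov divr_gt0 ?expR_gt0.
  have := subr_le_mul_ln_div (ltW Qy) Wy.
  have -> : Q y * ln (Q y / W y) = Q y * (ln (Q y) - col_loggeo y) + Q y * ln Z1.
    by rewrite /W ycov !ln_div ?posrE ?divr_gt0 ?expR_gt0 // expRK; ring.
  lra.
exists W => //.
have ac : abs_cont (prod_dist p W) P.
  by apply/(abs_cont_prodP W0) => y; rewrite /W; case: ifP; rewrite ?ltxx.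
rewrite KL_prod //; congr EFin.
transitivity (\sum_y W y * (- ln Z1)); last by rewrite -mulr_suml W1 mul1r.
apply: eq_bigr => y _; rewrite /W; case: ifP => _; last by rewrite !mul0r.
by rewrite ln_div ?posrE ?expR_gt0 // expRK; congr (_ * _); ring.
Qed.

Lemma umlaut_uncovered : ~ (exists y, covers y) -> umlaut P = +oo%E.
Proof.
move=> ncov; apply: ereal_inf_image_pinfty => Q [Q0 Q1]; rewrite /KL.
case: asboolP => // ac; exfalso.
have [y Qy] : exists y, 0 < Q y by apply: psumr_gt0_exists; rewrite // Q1.
by apply: ncov; exists y; exact: (abs_cont_prodP Q0).1 ac y Qy.
Qed.

Definition col_weight y x := if 0 < P (x, y) then p x else 0.

Lemma col_weight_ge0 y x : 0 <= col_weight y x.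
Proof. by rewrite /col_weight; case: ifP => // _; exact: margX_ge0. Qed.

Lemma col_weight_covers y : covers y -> col_weight y = p.
Proof.
move=> /coversP ycov; apply/funext => x; rewrite /col_weight; case: ifPn => // nP.
by apply/esym/ge0_ngt0_eq0; [exact: margX_ge0 | apply: contraNN nP; exact: ycov].
Qed.

Lemma sum_col_weight_lt1 y : ~~ covers y -> \sum_x col_weight y x < 1.
Proof.
move=> ncov.
have [x0 px0 nP0] : exists2 x, 0 < p x & ~~ (0 < P (x, y)).
  apply: contrapT => nex; apply: (negP ncov); apply/coversP => x px.
  by apply: contrapT => nP; apply: nex; exists x => //; exact/negP.
rewrite -sum_margX (bigD1 x0) //= [ltRHS](bigD1 x0) //= {1}/col_weight (negbTE nP0) add0r.
have : \sum_(x | x != x0) col_weight y x <= \sum_(x | x != x0) p x.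
  by apply: ler_sum => x _; rewrite /col_weight; case: ifP => // _; exact: margX_ge0.
lra.
Qed.

Lemma col_sum_mgf a y : a != 0 -> a != 1 ->
  col_sum a y = mgf (col_weight y) (col_logratio y) (1 - a).
Proof.
move=> a0 a1; apply: eq_bigr => x _; rewrite /col_weight /col_logratio.
have [px0|px_neq0] := eqVneq (p x) 0.
  by rewrite px0 (powR0 a0) !mul0r; case: ifP => _; rewrite mul0r.
have px : 0 < p x by rewrite lt0r px_neq0 margX_ge0.
case: (boolP (0 < P (x, y))) => Pxy; last first.
  by rewrite (ge0_ngt0_eq0 (P_ge0 _) Pxy) mul0r powR0 ?mulr0 // subr_eq0 eq_sym.
rewrite /powR !gt_eqF // -expRD ln_div ?posrE //.
by rewrite -[X in _ = X * _](@lnK R (p x)) ?posrE // -expRD; congr expR; ring.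
Qed.

Lemma cvg_col_mean_covers y : covers y ->
  col_mean a y @[a --> (1:R)^'] --> expR (col_loggeo y).
Proof.
move=> ycov.
have := cvg_onem (cvg_ln_mgf_div (c := col_logratio y) margX_ge0 sum_margX).
move=> /(continuous_cvg _ (@continuous_expR R _)) lim; apply: cvg_trans lim.
apply: near_eq_cvg; near=> a.
have a0 : 0 < a by near: a; apply: nbhs_dnbhs; exact: lt_nbhsr ltr01.
have a1 : a != 1 by near: a; exact: nbhs_dnbhs_neq.
rewrite /= /col_mean /powR gt_eqF ?col_sum_gt0_covers // col_sum_mgf ?lt0r_neq0 //.
by rewrite col_weight_covers.
Unshelve. all: by end_near.
Qed.

Lemma cvg_col_mean_uncovered y : ~~ covers y -> col_mean a y @[a --> (1:R)^'-] --> 0.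
Proof.
move=> ncov.
have phi0_lt1 : mgf (col_weight y) (col_logratio y) 0 < 1.
  by rewrite mgf0; exact: sum_col_weight_lt1.
have := cvg_powR_inv_onem (fun t => mgf_ge0 (col_logratio y) t (col_weight_ge0 y))
  (mgf_continuous (t := 0)) phi0_lt1.
apply: cvg_trans; apply: near_eq_cvg; near=> a.
have a0 : 0 < a by near: a; apply: nbhs_left_gt; exact: ltr01.
have a1 : a < 1 by near: a; exact: nbhs_left_lt.
by rewrite /= /col_mean col_sum_mgf ?lt0r_neq0 ?lt_eqF.
Unshelve. all: by end_near.
Qed.

Lemma Zlt_cvg : Zlt a @[a --> (1:R)^'-] --> Z1.
Proof.
rewrite /Z1 big_mkcond /=; apply: (cvg_big add_continuous) => // y _.
case: ifPn => [ycov|ncov]; last exact: cvg_col_mean_uncovered.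
exact/cvg_dnbhs_at_left/cvg_col_mean_covers.
Qed.

Lemma Zgt_cvg : Zgt a @[a --> (1:R)^'+] --> Z1.
Proof.
apply: (cvg_big add_continuous) => // y ycov.
exact/cvg_dnbhs_at_right/cvg_col_mean_covers.
Qed.

Lemma renyi_umlaut_cvg_left : renyi_umlaut a P @[a --> (1:R)^'-] --> umlaut P.
Proof.
have near_lt1 : \forall a \near (1:R)^'-, (- ln (Zlt a))%:E = renyi_umlaut a P.
  near=> a; apply/esym/renyi_umlaut_lt1; apply/andP; split; near: a.
  - by apply: nbhs_left_gt; exact: ltr01.
  - exact: nbhs_left_lt.
apply: cvg_trans (near_eq_cvg near_lt1) _.
have [cov|ncov] := pselect (exists y, covers y).
  by rewrite umlaut_covered //; exact: cvg_oppr_ln (Z1_gt0 cov) Zlt_cvg.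
rewrite umlaut_uncovered //; apply: cvgey_oppr_ln; last exact: nearW Zlt_gt0.
by rewrite -(Z1_eq0 ncov); exact: Zlt_cvg.
Unshelve. all: by end_near.
Qed.

Lemma renyi_umlaut_cvg_right : renyi_umlaut a P @[a --> (1:R)^'+] --> umlaut P.
Proof.
have near_gt1 : \forall a \near (1:R)^'+, 1 < a by exact: nbhs_right_gt.
have [cov|ncov] := pselect (exists y, covers y).
  have near_Zgt : \forall a \near (1:R)^'+, (- ln (Zgt a))%:E = renyi_umlaut a P.
    by apply: filterS near_gt1 => a a1; rewrite renyi_umlaut_gt1.
  rewrite umlaut_covered //; apply: cvg_trans (near_eq_cvg near_Zgt) _.
  exact: cvg_oppr_ln (Z1_gt0 cov) Zgt_cvg.
rewrite umlaut_uncovered //; apply: cvg_near_cst.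
by apply: filterS near_gt1 => a a1; rewrite renyi_umlaut_gt1_uncovered.
Qed.

End umlaut_closed_forms.

Theorem mainTheorem11 (R : realType) (X Y : finType) (P : X * Y -> R) :
  is_dist P ->
  (renyi_umlaut a P @[a --> (1 : R)^'-] --> umlaut P) /\
  (renyi_umlaut a P @[a --> (1 : R)^'+] --> umlaut P).
Proof.
by move=> P_dist; split; [exact: renyi_umlaut_cvg_left | exact: renyi_umlaut_cvg_right].
Qed.
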